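(* The horizontal curve $\gamma_0$ is not a singular (abnormal) curve of the distribution $\mathcal D_n$ on $\mathbb C_n$. That is, the endpoint map $E:H^2_{\mathcal D_n}(\gamma_0(0))\to\mathbb C_n$, $E(c)=c(1)$, has surjective differential at $\gamma_0$. Consequently, near $\gamma_0$, the set of horizontal curves in $H^2_{\mathcal D_n}(\gamma_0(0))$ ending at $\gamma_0(1)=\sigma(\gamma_0(0))$ is a Hilbert submanifold of codimension $2n-1$.
   Context: Let $n\ge 3$. $\mathcal P_n$ is the manifold of convex $n$-gons in $\mathbb R^2$, encoded by counterclockwise-ordered side lines $L_i=\{x\cos\alpha_i+y\sin\alpha_i=p_i\}$ (indices mod $n$, $(\cos\alpha_i,\sin\alpha_i)$ the outer unit normal). $\mathcal D_n$ is the distribution spanned by $\xi_i=\partial_{\alpha_i}+\Phi_i\partial_{p_i}$, $i=1,\dots,n$, with $$\Phi_i=\frac{\cos^2\!\big(\frac{\alpha_i-\alpha_{i-1}}2\big)(p_{i+1}+p_i)-\cos^2\!\big(\frac{\alpha_{i+1}-\alpha_i}2\big)(p_{i-1}+p_i)}{2\sin\!\big(\frac{\alpha_{i+1}-\alpha_{i-1}}2\big)\cos\!\big(\frac{\alpha_i-\alpha_{i-1}}2\big)\cos\!\big(\frac{\alpha_{i+1}-\alpha_i}2\big)}.$$ Geometrically, $\xi_i$ is the infinitesimal counterclockwise rotation of $L_i$ about its tangency point with the circle tangent to $L_{i-1},L_i,L_{i+1}$. That circle lies on the polygon's side of $L_{i\pm1}$ and on the opposite side of $L_i$. $\mathcal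 D_n$ is tangent to the level sets of the perimeter $F$, and $\mathbb C_n=\{F=2n\tan(\pi/n)\}$. A horizontal curve is a curve tangent to $\mathcal D_n$. $H^2_{\mathcal D_n}(c_0)$ denotes the Hilbert manifold of horizontal curves $c:[0,1]\to\mathbb C_n$ with $c(0)=c_0$ and with first two derivatives square integrable. $\gamma_0(t)$ is given by $\alpha_i(t)=\frac{2\pi}{n}(t+i-1)$, $p_i(t)=1$: the regular $n$-gons circumscribed about the unit circle. $\sigma$ is the cyclic relabeling of sides $L_i\mapsto L_{i+1}$. *)

From Stdlib Require Import Reals Lra Lia.
From Coquelicot Require Import Coquelicot.
Open Scope R_scope.

(* A point of P_n is encoded (locally, on a lift of the angles) by
   a : nat -> R (angles alpha) and p : nat -> R (support numbers), with
   0-based indices 0..n-1 (paper index i corresponds to i-1 here).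
   Indices are cyclic, with the angle convention alpha_{i+n} = alpha_i + 2 pi
   (counterclockwise order of the sides). *)

Definition aprev (n : nat) (a : nat -> R) (i : nat) : R :=
  match i with O => a (n - 1)%nat - 2 * PI | S k => a k end.
Definition anext (n : nat) (a : nat -> R) (i : nat) : R :=
  if Nat.eqb i (n - 1) then a O + 2 * PI else a (S i).
Definition pprev (n : nat) (p : nat -> R) (i : nat) : R :=
  match i with O => p (n - 1)%nat | S k => p k end.
Definition pnext (n : nat) (p : nat -> R) (i : nat) : R :=
  if Nat.eqb i (n - 1) then p O else p (S i).

(* The coefficient Phi_i of the vector field xi_i = d/dalpha_i + Phi_i d/dp_i *)
Definition Phi (n : nat) (a p : nat -> R) (i : nat) : R :=
  (cos ((a i - aprev n a i) / 2) ^ 2 * (pnext n p i + p i)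
   - cos ((anext n a i - a i) / 2) ^ 2 * (pprev n p i + p i))
  / (2 * sin ((anext n a i - aprev n a i) / 2)
       * cos ((a i - aprev n a i) / 2) * cos ((anext n a i - a i) / 2)).

(* Length of side i of the polygon (segment of L_i between L_{i-1} and L_{i+1}) *)
Definition side_length (n : nat) (a p : nat -> R) (i : nat) : R :=
  (pnext n p i - p i * cos (anext n a i - a i)) / sin (anext n a i - a i)
  + (pprev n p i - p i * cos (a i - aprev n a i)) / sin (a i - aprev n a i).

Definition perimeter (n : nat) (a p : nat -> R) : R :=
  sum_f_R0 (fun i => side_length n a p i) (n - 1).

Definition gamma0_a (n : nat) (t : R) (i : nat) : R := 2 * PI / INR n * (t + INR i).
Definition gamma0_p (n : nat) (t : R) (i : nat) : R := 1.

(* c = (ca, cp) is horizontal at time t, with controls u: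
   c'(t) = sum_j u_j(t) xi_j(c(t)). *)
Definition horizontal_with (n : nat) (ca cp : R -> nat -> R) (u : nat -> R -> R)
  (t : R) : Prop :=
  forall j, (j < n)%nat ->
    is_derive (fun s => ca s j) t (u j t) /\
    is_derive (fun s => cp s j) t (u j t * Phi n (ca t) (cp t) j).

Definition dirPhi (n : nat) (a p va vp : nat -> R) (j : nat) : R :=
  Derive (fun s => Phi n (fun k => a k + s * va k) (fun k => p k + s * vp k) j) 0.

(* (da, dp) solves at time t the linearization, along the horizontal curve
   (ca, cp) with controls u, of the control system c' = sum_j u_j xi_j(c),
   for the control variation du:
   dc' = sum_j du_j xi_j(c) + sum_j u_j (D xi_j)(c)[dc]. *)
Definition linearized_at (n : nat) (ca cp : R -> nat -> R) (u du : nat -> R -> R)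
  (da dp : R -> nat -> R) (t : R) : Prop :=
  forall j, (j < n)%nat ->
    is_derive (fun s => da s j) t (du j t) /\
    is_derive (fun s => dp s j) t
      (du j t * Phi n (ca t) (cp t) j
       + u j t * dirPhi n (ca t) (cp t) (da t) (dp t) j).

(* (va, vp) is tangent to the level set C_n of F at (a, p): dF(a,p)[v] = 0 *)
Definition tangent_to_level (n : nat) (a p va vp : nat -> R) : Prop :=
  Derive (fun s => perimeter n (fun k => a k + s * va k) (fun k => p k + s * vp k)) 0 = 0.

(* Along gamma_0 all gaps between consecutive normal angles equal 2 pi / n and all support
   numbers equal 1, so Phi vanishes there and the linearised control system has constant
   coefficients: da' = du and dp' = c2 * D2 da + c1 * D1 dp, with D2 the cyclic second
   difference and D1 the cyclic central difference.  A target (va, vp) tangent to C_n has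
   sum vp = 0, so vp = D2 Z for some Z.  Since D1 and D2 commute, dp can be chosen as any
   smooth interpolation from 0 to D2 Z, the equation for dp' is solved for da, and the
   remaining freedom in dp steers da(1) to va. *)

From Stdlib Require Import Reals Lra Lia.
From Coquelicot Require Import Coquelicot.
Open Scope R_scope.

Definition cyc_succ (n j : nat) : nat := if Nat.eqb j (n - 1) then 0%nat else S j.
Definition cyc_pred (n j : nat) : nat := match j with O => (n - 1)%nat | S k => k end.

Lemma pnext_cyc_succ n (v : nat -> R) j : pnext n v j = v (cyc_succ n j).
Proof. unfold pnext, cyc_succ. destruct (Nat.eqb j (n - 1)); reflexivity. Qed.

Lemma pprev_cyc_pred n (v : nat -> R) j : pprev n v j = v (cyc_pred n j).
Proof. destruct j; reflexivity. Qed.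

Lemma cyc_pred_lt n i : (i < n)%nat -> (cyc_pred n i < n)%nat.
Proof. intros Hi. unfold cyc_pred. destruct i; lia. Qed.

Lemma cyc_pred_succ n i : (i < n)%nat -> cyc_pred n (cyc_succ n i) = i.
Proof. intros Hi. unfold cyc_succ. destruct (Nat.eqb_spec i (n - 1)); simpl; lia. Qed.

Lemma cyc_succ_pred n i : (i < n)%nat -> cyc_succ n (cyc_pred n i) = i.
Proof.
  intros Hi. unfold cyc_succ, cyc_pred. destruct i.
  - rewrite Nat.eqb_refl. reflexivity.
  - destruct (Nat.eqb_spec i (n - 1)); lia.
Qed.

Lemma gap_prev_line n a X s j :
  a j + s * X j - aprev n (fun k => a k + s * X k) j
  = a j - aprev n a j + s * (X j - X (cyc_pred n j)).
Proof. unfold aprev, cyc_pred. destruct j; ring. Qed.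

Lemma gap_next_line n a X s j :
  anext n (fun k => a k + s * X k) j - (a j + s * X j)
  = anext n a j - a j + s * (X (cyc_succ n j) - X j).
Proof. unfold anext, cyc_succ. destruct (Nat.eqb j (n - 1)); ring. Qed.

Definition cdiff1 (n : nat) (Z : nat -> R) (j : nat) : R :=
  Z (cyc_succ n j) - Z (cyc_pred n j).
Definition cdiff2 (n : nat) (Z : nat -> R) (j : nat) : R :=
  Z (cyc_succ n j) - 2 * Z j + Z (cyc_pred n j).

Fixpoint partial_sum (f : nat -> R) (m : nat) : R :=
  match m with O => 0 | S k => partial_sum f k + f k end.

Lemma partial_sum_ext f g m :
  (forall i, (i < m)%nat -> f i = g i) -> partial_sum f m = partial_sum g m.
Proof.
  induction m as [|m IH]; intros H; simpl; [reflexivity|].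
  rewrite IH, H; [reflexivity | lia | intros; apply H; lia].
Qed.

Lemma partial_sum_plus f g m :
  partial_sum (fun i => f i + g i) m = partial_sum f m + partial_sum g m.
Proof. induction m as [|m IH]; simpl; [ring|]. rewrite IH. ring. Qed.

Lemma partial_sum_scal c f m : partial_sum (fun i => c * f i) m = c * partial_sum f m.
Proof. induction m as [|m IH]; simpl; [ring|]. rewrite IH. ring. Qed.

Lemma partial_sum_const c m : partial_sum (fun _ => c) m = INR m * c.
Proof. induction m as [|m IH]; simpl partial_sum; [simpl; ring|]. rewrite IH, S_INR. ring. Qed.

Lemma partial_sum_shift f m : partial_sum (fun i => f (S i)) m + f 0%nat = partial_sum f (S m).
Proof. induction m as [|m IH]; simpl partial_sum; [ring|]. simpl partial_sum in IH. rewrite <- IH. ring. Qed.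

Lemma sum_f_R0_partial_sum f m : sum_f_R0 f m = partial_sum f (S m).
Proof. induction m as [|m IH]; simpl; [ring|]. simpl in IH. rewrite IH. ring. Qed.

Lemma partial_sum_cyc_succ n Y :
  (1 <= n)%nat -> partial_sum (fun i => Y (cyc_succ n i)) n = partial_sum Y n.
Proof.
  intros H. destruct n as [|m]; [lia|].
  rewrite <- (partial_sum_shift Y m).
  unfold cyc_succ. replace (S m - 1)%nat with m by lia.
  cbn [partial_sum]. rewrite Nat.eqb_refl.
  rewrite (partial_sum_ext _ (fun i => Y (S i)) m); [reflexivity|].
  intros i Hi. destruct (Nat.eqb_spec i m); [lia|reflexivity].
Qed.

Lemma partial_sum_cyc_pred n Y :
  (1 <= n)%nat -> partial_sum (fun i => Y (cyc_pred n i)) n = partial_sum Y n.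
Proof.
  intros H. destruct n as [|m]; [lia|].
  rewrite <- partial_sum_shift. simpl. replace (m - 0)%nat with m by lia. reflexivity.
Qed.

Lemma is_derive_partial_sum (F : R -> nat -> R) (dF : nat -> R) m x :
  (forall i, (i < m)%nat -> is_derive (fun s => F s i) x (dF i)) ->
  is_derive (fun s => partial_sum (F s) m) x (partial_sum dF m).
Proof.
  induction m as [|m IH]; intros H; simpl.
  - apply (is_derive_const (V := R_NormedModule)).
  - apply (is_derive_plus (fun s => partial_sum (F s) m) (fun s => F s m));
      [apply IH; intros; apply H|apply H]; lia.
Qed.

(* Any vector with zero sum is a second difference: integrate twice, centring the first integral. *)
Lemma cdiff2_onto n v :
  (1 <= n)%nat -> partial_sum v n = 0 ->
  exists Z, forall i, (i < n)%nat -> cdiff2 n Z i = v i.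
Proof.
  intros Hn Hv.
  set (G := fun i => partial_sum v (S i)).
  set (w := fun i => G i - partial_sum G n / INR n).
  exists (partial_sum w). intros i Hi.
  assert (Hw : partial_sum w n = 0).
  { unfold w. rewrite (partial_sum_plus G (fun _ => - (partial_sum G n / INR n))).
    rewrite partial_sum_const. field. apply not_0_INR. lia. }
  assert (Hstep : forall k, (k < n)%nat ->
            partial_sum w (cyc_succ n k) - partial_sum w k = w k).
  { intros k Hk. unfold cyc_succ. destruct (Nat.eqb_spec k (n - 1)).
    - subst k. replace n with (S (n - 1)) in Hw by lia. simpl in Hw |- *. lra.
    - simpl. ring. }
  assert (Hdiff : w i - w (cyc_pred n i) = v i).
  { unfold w, G, cyc_pred. destruct i.
    - replace (S (n - 1)) with n by lia. rewrite Hv. simpl. ring.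
    - simpl. ring. }
  pose proof (Hstep (cyc_pred n i) (cyc_pred_lt n i Hi)) as Hprev.
  rewrite cyc_succ_pred in Hprev by exact Hi.
  unfold cdiff2. rewrite <- Hdiff, <- (Hstep i Hi), <- Hprev. ring.
Qed.

Definition phi_local (gm gp yp y yn : R) : R :=
  (cos (gm / 2) ^ 2 * (yn + y) - cos (gp / 2) ^ 2 * (yp + y))
  / (2 * sin ((gp + gm) / 2) * cos (gm / 2) * cos (gp / 2)).

Definition side_local (gm gp yp y yn : R) : R :=
  (yn - y * cos gp) / sin gp + (yp - y * cos gm) / sin gm.

Lemma Phi_local n a p j :
  Phi n a p j = phi_local (a j - aprev n a j) (anext n a j - a j)
                  (pprev n p j) (p j) (pnext n p j).
Proof.
  unfold Phi, phi_local.
  replace (anext n a j - aprev n a j) with (anext n a j - a j + (a j - aprev n a j)) by ring.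
  reflexivity.
Qed.

Lemma side_length_local n a p j :
  side_length n a p j = side_local (a j - aprev n a j) (anext n a j - a j)
                          (pprev n p j) (p j) (pnext n p j).
Proof. reflexivity. Qed.

Section RegularVertex.
Variables (th dm dp yp y yn : R).
Hypothesis Hth : 0 < th < PI / 2.

Let sin_pos : 0 < sin th.
Proof. apply sin_gt_0; lra. Qed.
Let cos_pos : 0 < cos th.
Proof. apply cos_gt_0; lra. Qed.

Lemma phi_local_regular : phi_local (2 * th) (2 * th) 1 1 1 = 0.
Proof. unfold phi_local, Rdiv. ring. Qed.

Lemma side_local_regular : side_local (2 * th) (2 * th) 1 1 1 = 2 * tan th.
Proof.
  unfold side_local, tan. rewrite cos_2a_sin, sin_2a. field. lra.
Qed.

Lemma phi_local_derive :
  is_derive (fun s => phi_local (2 * th + s * dm) (2 * th + s * dp)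
                        (1 + s * yp) (1 + s * y) (1 + s * yn)) 0
    (/ (2 * cos th ^ 2) * (dp - dm) + / (4 * sin th * cos th) * (yn - yp)).
Proof.
  unfold phi_local.
  auto_derive; rewrite !Rmult_0_l, !Rplus_0_r;
    replace ((2 * th + 2 * th) * / 2) with (2 * th) by field;
    replace (2 * th * / 2) with th by field; rewrite sin_2a.
  - apply Rgt_not_eq. repeat apply Rmult_lt_0_compat; lra.
  - field. lra.
Qed.

Lemma side_local_derive :
  is_derive (fun s => side_local (2 * th + s * dm) (2 * th + s * dp)
                        (1 + s * yp) (1 + s * y) (1 + s * yn)) 0
    ((yn + yp - 2 * y * cos (2 * th)) / sin (2 * th)
     + (sin (2 * th) ^ 2 + cos (2 * th) ^ 2 - cos (2 * th)) / sin (2 * th) ^ 2 * (dp + dm)).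
Proof.
  assert (H2 : 0 < sin (2 * th)) by (rewrite sin_2a; repeat apply Rmult_lt_0_compat; lra).
  unfold side_local.
  auto_derive; rewrite !Rmult_0_l, !Rplus_0_r.
  - repeat split; lra.
  - field. lra.
Qed.

End RegularVertex.

Section RegularPolygon.
Variables (n : nat) (a : nat -> R) (th : R).
Hypothesis Hn : (1 <= n)%nat.
Hypothesis Hth : 0 < th < PI / 2.
Hypothesis Hgaps : forall j, (j < n)%nat ->
  a j - aprev n a j = 2 * th /\ anext n a j - a j = 2 * th.

Lemma Phi_regular j : (j < n)%nat -> Phi n a (fun _ => 1) j = 0.
Proof.
  intros Hj. rewrite Phi_local, pprev_cyc_pred, pnext_cyc_succ.
  destruct (Hgaps j Hj) as [-> ->]. apply phi_local_regular.
Qed.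

Lemma Phi_line X Y j s : (j < n)%nat ->
  Phi n (fun k => a k + s * X k) (fun k => 1 + s * Y k) j
  = phi_local (2 * th + s * (X j - X (cyc_pred n j))) (2 * th + s * (X (cyc_succ n j) - X j))
      (1 + s * Y (cyc_pred n j)) (1 + s * Y j) (1 + s * Y (cyc_succ n j)).
Proof.
  intros Hj. rewrite Phi_local, pprev_cyc_pred, pnext_cyc_succ. cbv beta.
  rewrite gap_prev_line, gap_next_line. destruct (Hgaps j Hj) as [-> ->]. reflexivity.
Qed.

Lemma side_length_line X Y j s : (j < n)%nat ->
  side_length n (fun k => a k + s * X k) (fun k => 1 + s * Y k) j
  = side_local (2 * th + s * (X j - X (cyc_pred n j))) (2 * th + s * (X (cyc_succ n j) - X j))
      (1 + s * Y (cyc_pred n j)) (1 + s * Y j) (1 + s * Y (cyc_succ n j)).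
Proof.
  intros Hj. rewrite side_length_local, pprev_cyc_pred, pnext_cyc_succ. cbv beta.
  rewrite gap_prev_line, gap_next_line. destruct (Hgaps j Hj) as [-> ->]. reflexivity.
Qed.

Lemma dirPhi_regular X Y j : (j < n)%nat ->
  dirPhi n a (fun _ => 1) X Y j
  = / (2 * cos th ^ 2) * cdiff2 n X j + / (4 * sin th * cos th) * cdiff1 n Y j.
Proof.
  intros Hj. unfold dirPhi.
  rewrite (Derive_ext _ _ _ (fun s => Phi_line X Y j s Hj)).
  rewrite (is_derive_unique _ _ _ (phi_local_derive _ _ _ _ _ _ Hth)).
  unfold cdiff1, cdiff2. ring.
Qed.

Lemma perimeter_regular : perimeter n a (fun _ => 1) = 2 * INR n * tan th.
Proof.
  unfold perimeter. rewrite sum_f_R0_partial_sum. replace (S (n - 1)) with n by lia.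
  rewrite (partial_sum_ext _ (fun _ => 2 * tan th)).
  - rewrite partial_sum_const. ring.
  - intros j Hj. rewrite side_length_local, pprev_cyc_pred, pnext_cyc_succ.
    destruct (Hgaps j Hj) as [-> ->]. apply side_local_regular, Hth.
Qed.

Lemma perimeter_line_derive X Y :
  is_derive (fun s => perimeter n (fun k => a k + s * X k) (fun k => 1 + s * Y k)) 0
    (2 * tan th * partial_sum Y n).
Proof.
  assert (Hs : 0 < sin th) by (apply sin_gt_0; lra).
  assert (Hc : 0 < cos th) by (apply cos_gt_0; lra).
  assert (Hs2 : 0 < sin (2 * th)) by (rewrite sin_2a; repeat apply Rmult_lt_0_compat; lra).
  set (E := (sin (2 * th) ^ 2 + cos (2 * th) ^ 2 - cos (2 * th)) / sin (2 * th) ^ 2).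
  set (C := / sin (2 * th)).
  assert (Hsum : forall s,
    partial_sum (side_length n (fun k => a k + s * X k) (fun k => 1 + s * Y k)) n
    = perimeter n (fun k => a k + s * X k) (fun k => 1 + s * Y k)).
  { intros s. unfold perimeter. rewrite sum_f_R0_partial_sum.
    replace (S (n - 1)) with n by lia. reflexivity. }
  apply (is_derive_ext _ _ _ _ Hsum).
  (* The angle variations enter only through X (succ j) - X (pred j), whose sum vanishes. *)
  replace (2 * tan th * partial_sum Y n) with (partial_sum (fun j =>
      C * Y (cyc_succ n j) + (C * Y (cyc_pred n j) + ((-2 * cos (2 * th) * C) * Y j
      + (E * X (cyc_succ n j) + (- E) * X (cyc_pred n j))))) n).
  - apply is_derive_partial_sum. intros j Hj.
    apply (is_derive_ext _ _ _ _ (fun s => eq_sym (side_length_line X Y j s Hj))).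
    replace (C * Y (cyc_succ n j) + _) with
      ((Y (cyc_succ n j) + Y (cyc_pred n j) - 2 * Y j * cos (2 * th)) / sin (2 * th)
       + E * ((X (cyc_succ n j) - X j) + (X j - X (cyc_pred n j))))
      by (unfold C; field; lra).
    apply side_local_derive, Hth.
  - rewrite !partial_sum_plus, !partial_sum_scal, partial_sum_cyc_succ, partial_sum_cyc_pred,
      partial_sum_cyc_succ, partial_sum_cyc_pred by exact Hn.
    unfold C, tan. rewrite cos_2a_sin, sin_2a in *. field. lra.
Qed.

Lemma tangent_to_level_regular X Y :
  tangent_to_level n a (fun _ => 1) X Y -> partial_sum Y n = 0.
Proof.
  intros Hlevel.
  assert (H : 2 * tan th * partial_sum Y n = 0)
    by (rewrite <- (is_derive_unique _ _ _ (perimeter_line_derive X Y)); exact Hlevel).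
  assert (Htan : 0 < tan th)
    by (unfold tan; apply Rdiv_lt_0_compat; [apply sin_gt_0 | apply cos_gt_0]; lra).
  apply Rmult_integral in H as [H | H]; lra.
Qed.

End RegularPolygon.

Section Steering.
Variables (n : nat) (c2 c1 : R) (Z W : nat -> R).
Hypothesis Hc2 : c2 <> 0.

(* Hermite interpolation: s(t) = 3t^2 - 2t^3 and r(t) = t^3 - t^2 have s(1) = r'(1) = 1 and
   all other values and slopes at 0 and 1 equal to 0.  With dp = s * cdiff2 Z + r * cdiff2 W,
   da solves c2 * cdiff2 da = dp' - c1 * cdiff1 dp because cdiff1 and cdiff2 commute. *)
Definition steer_dp (t : R) (j : nat) : R :=
  (3 * t ^ 2 - 2 * t ^ 3) * cdiff2 n Z j + (t ^ 3 - t ^ 2) * cdiff2 n W j.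

Definition steer_da (t : R) (j : nat) : R :=
  ((6 * t - 6 * t ^ 2) * Z j + (3 * t ^ 2 - 2 * t) * W j
   - c1 * ((3 * t ^ 2 - 2 * t ^ 3) * cdiff1 n Z j + (t ^ 3 - t ^ 2) * cdiff1 n W j)) / c2.

Definition steer_du (j : nat) (t : R) : R :=
  ((6 - 12 * t) * Z j + (6 * t - 2) * W j
   - c1 * ((6 * t - 6 * t ^ 2) * cdiff1 n Z j + (3 * t ^ 2 - 2 * t) * cdiff1 n W j)) / c2.

Definition steer_du' (j : nat) (t : R) : R :=
  (-12 * Z j + 6 * W j - c1 * ((6 - 12 * t) * cdiff1 n Z j + (6 * t - 2) * cdiff1 n W j)) / c2.

Lemma steer_du_smooth j t :
  is_derive (steer_du j) t (steer_du' j t) /\ continuous (steer_du' j) t.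
Proof.
  split.
  - unfold steer_du, steer_du'. auto_derive; [auto | field; exact Hc2].
  - apply (ex_derive_continuous (V := R_NormedModule)). unfold steer_du'. auto_derive. auto.
Qed.

Lemma steer_da_derive j t : is_derive (fun s => steer_da s j) t (steer_du j t).
Proof. unfold steer_da, steer_du. auto_derive; [auto | field; exact Hc2]. Qed.

Lemma steer_dp_derive j t : (j < n)%nat ->
  is_derive (fun s => steer_dp s j) t
    (c2 * cdiff2 n (steer_da t) j + c1 * cdiff1 n (steer_dp t) j).
Proof.
  intros Hj. unfold steer_dp, steer_da, cdiff2, cdiff1.
  rewrite cyc_pred_succ, cyc_succ_pred by exact Hj.
  auto_derive; [auto | field; exact Hc2].
Qed.

Lemma steer_boundary j :
  steer_da 0 j = 0 /\ steer_dp 0 j = 0 /\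
  steer_da 1 j = (W j - c1 * cdiff1 n Z j) / c2 /\ steer_dp 1 j = cdiff2 n Z j.
Proof. unfold steer_da, steer_dp, Rdiv. repeat split; ring. Qed.

End Steering.

Lemma linear_system_reachable n c2 c1 va vp :
  (1 <= n)%nat -> c2 <> 0 -> partial_sum vp n = 0 ->
  exists (du du' : nat -> R -> R) (da dp : R -> nat -> R),
    (forall j t, is_derive (du j) t (du' j t) /\ continuous (du' j) t) /\
    (forall j, (j < n)%nat -> da 0 j = 0 /\ dp 0 j = 0 /\ da 1 j = va j /\ dp 1 j = vp j) /\
    (forall t j, (j < n)%nat ->
       is_derive (fun s => da s j) t (du j t) /\
       is_derive (fun s => dp s j) t (c2 * cdiff2 n (da t) j + c1 * cdiff1 n (dp t) j)).
Proof.
  intros Hn Hc2 Hvp.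
  destruct (cdiff2_onto n vp Hn Hvp) as [Z HZ].
  set (W := fun j => c2 * va j + c1 * cdiff1 n Z j).
  exists (steer_du n c2 c1 Z W), (steer_du' n c2 c1 Z W),
         (steer_da n c2 c1 Z W), (steer_dp n Z W).
  split; [|split].
  - intros j t. apply steer_du_smooth, Hc2.
  - intros j Hj. destruct (steer_boundary n c2 c1 Z W j) as (-> & -> & -> & ->).
    rewrite HZ by exact Hj. unfold W. repeat split; [field; exact Hc2].
  - intros t j Hj. split; [apply steer_da_derive | apply steer_dp_derive]; assumption.
Qed.

Lemma pi_div_bounds n : (3 <= n)%nat -> 0 < PI / INR n < PI / 2.
Proof.
  intros Hn. pose proof PI_RGT_0.
  assert (H3 : 3 <= INR n) by (replace 3 with (INR 3) by (simpl; ring); apply le_INR, Hn).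
  split.
  - apply Rdiv_lt_0_compat; lra.
  - apply Rmult_lt_reg_r with (INR n); [lra|].
    unfold Rdiv. rewrite Rmult_assoc, Rinv_l by lra. nra.
Qed.

Lemma gamma0_gaps n t : (1 <= n)%nat -> forall j, (j < n)%nat ->
  gamma0_a n t j - aprev n (gamma0_a n t) j = 2 * (PI / INR n) /\
  anext n (gamma0_a n t) j - gamma0_a n t j = 2 * (PI / INR n).
Proof.
  intros Hn j Hj. assert (HI : INR n <> 0) by (apply not_0_INR; lia).
  unfold aprev, anext, gamma0_a. split.
  - destruct j; [rewrite minus_INR by lia | rewrite S_INR]; simpl INR; field; exact HI.
  - destruct (Nat.eqb_spec j (n - 1)) as [->|_];
      [rewrite minus_INR by lia | rewrite S_INR]; simpl INR; field; exact HI.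
Qed.

Lemma gamma0_horizontal n t : (3 <= n)%nat ->
  horizontal_with n (gamma0_a n) (gamma0_p n) (fun _ _ => 2 * PI / INR n) t.
Proof.
  intros Hn j Hj. split.
  - unfold gamma0_a. auto_derive; [auto | ring].
  - change (gamma0_p n t) with (fun _ : nat => 1).
    rewrite (Phi_regular n _ _ (gamma0_gaps n t ltac:(lia)) j Hj).
    unfold gamma0_p. auto_derive; [auto | ring].
Qed.

Lemma linearized_at_gamma0 n (du : nat -> R -> R) (da dp : R -> nat -> R) t :
  (3 <= n)%nat ->
  (forall j, (j < n)%nat ->
     is_derive (fun s => da s j) t (du j t) /\
     is_derive (fun s => dp s j) t
       (2 * PI / INR n * / (2 * cos (PI / INR n) ^ 2) * cdiff2 n (da t) j
        + 2 * PI / INR n * / (4 * sin (PI / INR n) * cos (PI / INR n)) * cdiff1 n (dp t) j)) ->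
  linearized_at n (gamma0_a n) (gamma0_p n) (fun _ _ => 2 * PI / INR n) du da dp t.
Proof.
  intros Hn Hlin j Hj. destruct (Hlin j Hj) as [Hda Hdp]. split; [exact Hda|].
  assert (Hgaps := gamma0_gaps n t ltac:(lia)).
  change (gamma0_p n t) with (fun _ : nat => 1).
  rewrite (Phi_regular n _ _ Hgaps j Hj),
    (dirPhi_regular n _ _ (pi_div_bounds n Hn) Hgaps _ _ j Hj).
  rewrite Rmult_0_r, Rplus_0_l, Rmult_plus_distr_l, <- !Rmult_assoc. exact Hdp.
Qed.

Theorem mainTheorem10 (n : nat) (Hn : (3 <= n)%nat) :
  (* gamma_0 is a horizontal curve (controls u_j = 2pi/n) lying in C_n *)
  (forall t, horizontal_with n (gamma0_a n) (gamma0_p n) (fun _ _ => 2 * PI / INR n) t) /\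
  (forall t, perimeter n (gamma0_a n t) (gamma0_p n t) = 2 * INR n * tan (PI / INR n)) /\
  (* the differential of the endpoint map at gamma_0 is onto T_{gamma_0(1)} C_n *)
  (forall va vp : nat -> R,
     tangent_to_level n (gamma0_a n 1) (gamma0_p n 1) va vp ->
     exists (du du' : nat -> R -> R) (da dp : R -> nat -> R),
       (forall j t, is_derive (du j) t (du' j t) /\ continuous (du' j) t) /\
       (forall j, (j < n)%nat ->
          da 0 j = 0 /\ dp 0 j = 0 /\ da 1 j = va j /\ dp 1 j = vp j) /\
       (forall t, 0 <= t <= 1 ->
          linearized_at n (gamma0_a n) (gamma0_p n) (fun _ _ => 2 * PI / INR n)
            du da dp t)).
Proof.
  assert (H1 : (1 <= n)%nat) by lia.
  assert (Hth := pi_div_bounds n Hn).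
  split; [|split].
  - intros t. apply gamma0_horizontal, Hn.
  - intros t. exact (perimeter_regular n _ _ H1 Hth (gamma0_gaps n t H1)).
  - intros va vp Hlevel.
    assert (Hvp := tangent_to_level_regular n _ _ H1 Hth (gamma0_gaps n 1 H1) va vp Hlevel).
    assert (Hc2 : 2 * PI / INR n * / (2 * cos (PI / INR n) ^ 2) <> 0).
    { assert (0 < cos (PI / INR n)) by (apply cos_gt_0; lra).
      apply Rgt_not_eq, Rmult_lt_0_compat.
      - replace (2 * PI / INR n) with (2 * (PI / INR n)) by (unfold Rdiv; ring). lra.
      - apply Rinv_0_lt_compat. nra. }
    set (c1 := 2 * PI / INR n * / (4 * sin (PI / INR n) * cos (PI / INR n))).
    destruct (linear_system_reachable n _ c1 va vp H1 Hc2 Hvp)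
      as (du & du' & da & dp & Hdu & Hends & Hlin).
    exists du, du', da, dp. split; [exact Hdu | split; [exact Hends|]].
    intros t _. apply linearized_at_gamma0; [exact Hn | intros j Hj; apply Hlin, Hj].
Qed.
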